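(* Let $D=\sum_{s=1}^N\gamma_s\varpi_{i_s}[\mathsf x_s]+\mu^+[\infty]+\mu^-[0]$ be a trigonometric $\Lambda^+$-valued divisor satisfying the integrality assumption with $1\le i_N\le n-1$ (so $\gamma_N=1$), and let $D''=\sum_{s=1}^{N-1}\gamma_s\varpi_{i_s}[\mathsf x_s]+\mu^+[\infty]+(\mu^-+\varpi_{i_N})[0]$. Then, treating $\mathsf x_N$ as a parameter, the limit of $T_D(z)$ as $\mathsf x_N\to0$ equals $T_{D''}(z)$.
   Context: Let $n\ge2$, $\Lambda=\bigoplus_{j=1}^n\mathbb{Z}\epsilon_j$, $\epsilon^\vee_j$ dual basis, $\alpha^\vee_i=\epsilon^\vee_i-\epsilon^\vee_{i+1}$, $\alpha_i=\epsilon_i-\epsilon_{i+1}$, $\varpi_i=-\sum_{j>i}\epsilon_j$ ($0\le i\le n-1$), $\Lambda^+=\{\nu:\alpha^\vee_i(\nu)\ge0\ \forall i\}$. A trigonometric $\Lambda^+$-valued divisor: $D=\sum_{s=1}^N\gamma_s\varpi_{i_s}[\mathsf x_s]+\mu^+[\infty]+\mu^-[0]$, $0\le i_s\le n-1$, $\mathsf x_s\in\mathbb{C}^\times$, $\gamma_s=1$ if $i_s\ne0$, $\gamma_s\in\{\pm1\}$ if $i_s=0$, $\mu^\pm\in\Lambda^+$; $\lambda=\sum_s\gamma_s\varpi_{i_s}$, $\lambda_{\mathsf x}=\sum_{s:\mathsf x_s=\mathsf x}\gamma_s\varpi_{i_s}$ (for $\mathsf x\in\mathbb{C}^\times$). Integrality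 assumption: $\lambda+\mu^++\mu^-=\sum_{i=1}^{n-1}a_i\alpha_i$, $a_i\in\mathbb{Z}_{\ge0}$; $a_0=a_n=0$ ($D$ and $D''$ give the same $a_i$). $\widetilde{\mathcal A}^v$: the $\mathbb{C}[v,v^{-1}]$-algebra generated by $D_{i,r}^{\pm1},\mathsf w_{i,r}^{\pm1/2},(\mathsf w_{i,r}-v^m\mathsf w_{i,s})^{-1},(1-v^l)^{-1}$ ($1\le i<n$, $1\le r\ne s\le a_i$, $m\in\mathbb{Z}$, $l\ne0$) with $D_{i,r}\mathsf w^{1/2}_{j,s}=v^{\delta_{ij}\delta_{rs}}\mathsf w^{1/2}_{j,s}D_{i,r}$, $D$'s commuting, $\mathsf w^{1/2}$'s commuting, obvious inverse relations; $\mathsf w_{i,r}=(\mathsf w^{1/2}_{i,r})^2$. $\mathsf Z_i(z)=\prod_{s:i_s=i}(1-v^{-i}\mathsf x_s/z)^{\gamma_s}$, $\mathsf W_j(z)=\prod_{r=1}^{a_j}(1-\mathsf w_{j,r}/z)$, $\mathsf W_{j,r}(z)=\prod_{s\ne r}(1-\mathsf w_{j,s}/z)$, $\mathsf W_0=\mathsf W_n=1$. Trigonometric Lax matrix of $D$: $T_D(z)_{\alpha\beta}=\sum_{i=1}^{\min(\alpha,\beta)}f^D_{\alpha i}(z)g^D_i(z)e^D_{i\beta}(z)$ (rational in $z$), $e^D_{ii}=f^D_{ii}=1$, with $g^D_i(z)=\prod_{t=1}^{a_i}\mathsf w_{i,t}^{-1/2}\prod_{t=1}^{a_{i-1}}\mathsf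 w_{i-1,t}^{1/2}\, z^{\epsilon^\vee_i(\mu^+)}\frac{\mathsf W_i(v^{-i}z)}{\mathsf W_{i-1}(v^{-i-1}z)}\prod_{\mathsf x\in\mathbb{C}^\times}(1-\mathsf x/z)^{-\epsilon^\vee_i(\lambda_{\mathsf x})}$; for $i<j$: $e^D_{ij}(z)=(-1)^{i-j+1}\prod_{t=1}^{a_{j-1}}\mathsf w_{j-1,t}\prod_{k=i}^{j-2}\prod_{t=1}^{a_k}\mathsf w_{k,t}^{1/2}\prod_{t=1}^{a_{i-1}}\mathsf w_{i-1,t}^{-1/2}\sum_{r_i,\dots,r_{j-1}}\frac{\prod_{k=i}^{j-1}(v^k\mathsf w_{k,r_k})^{-\alpha^\vee_k(\mu^+)}}{1-v^i\mathsf w_{i,r_i}/z}\cdot\frac{\mathsf W_{i-1}(v^{-1}\mathsf w_{i,r_i})\prod_{k=i}^{j-2}\mathsf W_{k,r_k}(v^{-1}\mathsf w_{k+1,r_{k+1}})}{\prod_{k=i}^{j-1}\mathsf W_{k,r_k}(\mathsf w_{k,r_k})}\prod_{k=i}^{j-1}\mathsf Z_k(\mathsf w_{k,r_k})\cdot\frac{\mathsf w_{i,r_i}}{\mathsf w_{j-1,r_{j-1}}}\prod_{k=i}^{j-1}D_{k,r_k}^{-1}$; $f^D_{ji}(z)=(-1)^{i-j+1}v^{i-j}\prod_{k=i+1}^j\prod_{t=1}^{a_k}\mathsf w_{k,t}^{-1/2}\sum_{r_i,\dots,r_{j-1}}\frac{1}{1-z/(v^{i+2}\mathsf w_{i,r_i})}\cdot\frac{\mathsf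 W_j(v\mathsf w_{j-1,r_{j-1}})\prod_{k=i+1}^{j-1}\mathsf W_{k,r_k}(v\mathsf w_{k-1,r_{k-1}})}{\prod_{k=i}^{j-1}\mathsf W_{k,r_k}(\mathsf w_{k,r_k})}\cdot\frac{\mathsf w_{j-1,r_{j-1}}}{\mathsf w_{i,r_i}}\prod_{k=i}^{j-1}D_{k,r_k}$ (sums over $1\le r_k\le a_k$); here $\mu^\pm$, $\lambda_{\mathsf x}$, $\mathsf Z_k$ are those of the divisor in question. *)

From HB Require Import structures.
From mathcomp Require Import all_boot all_order all_algebra.
From mathcomp Require Import complex.
From mathcomp Require Import reals.
Set Implicit Arguments. Unset Strict Implicit. Unset Printing Implicit Defensive.
Import Order.TTheory GRing.Theory Num.Theory.
Local Open Scope ring_scope.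

(* Weights.  A weight nu in Lambda = (+)_{j=1}^n Z eps_j is encoded as  *)
(* a function nu : nat -> int with nu j = eps^vee_j(nu) for 1 <= j <= n *)
(* (values outside 1..n are irrelevant).                               *)

Definition varpi (i j : nat) : int := if (i < j)%N then -1 else 0.

Definition alpha (i j : nat) : int := (j == i)%:Z - (j == i.+1)%:Z.

Definition dominant (n : nat) (mu : nat -> int) : Prop :=
  forall i, (1 <= i < n)%N -> 0 <= mu i - mu i.+1.

(* A point gamma_s varpi_{i_s} [x_s] of the divisor: (i_s, gamma_s, x_s) *)
Definition pt (K : Type) := (nat * int * K)%type.
Definition p_i {K} (p : pt K) : nat := p.1.1.
Definition p_g {K} (p : pt K) : int := p.1.2.
Definition p_x {K} (p : pt K) : K := p.2.

Section Divisors.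
Variable K : fieldType.
Variable n : nat.

Definition lam (pts : seq (pt K)) (j : nat) : int :=
  \sum_(p <- pts) p_g p * varpi (p_i p) j.

Definition lamx (pts : seq (pt K)) (x : K) (j : nat) : int :=
  \sum_(p <- pts | p_x p == x) p_g p * varpi (p_i p) j.

Definition valid_divisor (pts : seq (pt K)) (mup mum : nat -> int) : Prop :=
  [/\ forall p, p \in pts ->
        [/\ (p_i p <= n.-1)%N, p_x p != 0,
            (p_i p != 0)%N -> p_g p = 1
          & (p_i p == 0)%N -> p_g p = 1 \/ p_g p = -1],
      dominant n mup & dominant n mum].

Definition integrality (pts : seq (pt K)) (mup mum : nat -> int)
    (a : nat -> nat) : Prop :=
  forall j, (1 <= j <= n)%N ->
    lam pts j + mup j + mum j = \sum_(1 <= i < n) (a i)%:Z * alpha i j.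

End Divisors.

(* The algebra.  A is any K-algebra with elements v, z, D_{i,r},       *)
(* w^{1/2}_{i,r} satisfying the defining relations of tilde A^v, with   *)
(* v, z central and the elements inverted in tilde A^v (and in its      *)
(* extension by the rational functions of z used in T_D(z)) invertible.*)

Section Lax.
Variable K : fieldType.
Variable A : unitAlgType K.
Variable n : nat.
Variable a : nat -> nat.
Variables v z : A.
Variables Dg w12 : nat -> nat -> A.

Definition aa (k : nat) : nat := if (1 <= k < n)%N then a k else 0%N.

Definition okr (i r : nat) : bool := (1 <= i < n)%N && (1 <= r <= a i)%N.

Definition w (i r : nat) : A := w12 i r ^+ 2.

Record qt_relations : Prop := {
  v_unit : v \is a GRing.unit;
  v_central : forall y : A, v * y = y * v;
  z_unit : z \is a GRing.unit;
  z_central : forall y : A, z * y = y * z;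
  D_unit : forall i r, okr i r -> Dg i r \is a GRing.unit;
  w12_unit : forall i r, okr i r -> w12 i r \is a GRing.unit;
  Dw12_comm : forall i r j s, okr i r -> okr j s ->
     Dg i r * w12 j s = (if (i == j) && (r == s) then v else 1) * w12 j s * Dg i r;
  DD_comm : forall i r j s, okr i r -> okr j s -> Dg i r * Dg j s = Dg j s * Dg i r;
  ww_comm : forall i r j s, okr i r -> okr j s -> w12 i r * w12 j s = w12 j s * w12 i r;
  wdiff_unit : forall i r s (m : int), okr i r -> okr i s -> r != s ->
     (w i r - v ^ m * w i s) \is a GRing.unit;
  onev_unit : forall l : int, l != 0 -> (1 - v ^ l) \is a GRing.unit;
  (* localizations needed for the rational functions of z appearing in T_D *)
  zw_unit : forall i r (m : int), okr i r -> (z - v ^ m * w i r) \is a GRing.unit;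
  zx_unit : forall x : K, (z - x%:A) \is a GRing.unit;
  wx_unit : forall i r (m : int) (x : K), okr i r -> x != 0 ->
     (w i r - v ^ m * x%:A) \is a GRing.unit
}.

Definition Wf (j : nat) (y : A) : A :=
  \prod_(1 <= r < (aa j).+1) (1 - w j r / y).

Definition Wr (j r : nat) (y : A) : A :=
  \prod_(1 <= s < (aa j).+1 | s != r) (1 - w j s / y).

Definition Zf (pts : seq (pt K)) (k : nat) (y : A) : A :=
  \prod_(p <- pts | p_i p == k) (1 - v ^ (- (k%:Z)) * (p_x p)%:A / y) ^ (p_g p).

Definition sqw (i : nat) : A := \prod_(1 <= t < (aa i).+1) w12 i t.
Definition isqw (i : nat) : A := \prod_(1 <= t < (aa i).+1) (w12 i t)^-1.
Definition wprod (i : nat) : A := \prod_(1 <= t < (aa i).+1) w i t.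

(* Nested sum over r_lo, ..., r_{lo+m-1} with 1 <= r_k <= a_k; the
   summand receives the assignment k |-> r_k. *)
Fixpoint tsum (m lo : nat) (F : (nat -> nat) -> A) : A :=
  match m with
  | 0%N => F (fun _ => 0%N)
  | m'.+1 => \sum_(1 <= r < (aa lo).+1)
               tsum m' lo.+1 (fun g => F (fun k => if k == lo then r else g k))
  end.

Definition gD (pts : seq (pt K)) (mup : nat -> int) (i : nat) : A :=
  isqw i * sqw i.-1 * z ^ (mup i)
  * (Wf i (v ^ (- (i%:Z)) * z) / Wf i.-1 (v ^ (- (i.+1%:Z)) * z))
  * \prod_(x <- undup [seq p_x p | p <- pts]) (1 - x%:A / z) ^ (- lamx pts x i).

Definition eD (pts : seq (pt K)) (mup : nat -> int) (i j : nat) : A :=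
  (-1) ^ (i%:Z - j%:Z + 1) * wprod j.-1 * (\prod_(i <= k < j.-1) sqw k) * isqw i.-1 *
  tsum (j - i) i (fun r =>
     (\prod_(i <= k < j) (v ^+ k * w k (r k)) ^ (- (mup k - mup k.+1)))
     / (1 - v ^+ i * w i (r i) / z)
     * (Wf i.-1 (v^-1 * w i (r i))
        * \prod_(i <= k < j.-1) Wr k (r k) (v^-1 * w k.+1 (r k.+1)))
     / (\prod_(i <= k < j) Wr k (r k) (w k (r k)))
     * (\prod_(i <= k < j) Zf pts k (w k (r k)))
     * (w i (r i) / w j.-1 (r j.-1))
     * \prod_(i <= k < j) (Dg k (r k))^-1).

(* f^D_{ji}(z) for i < j  (argument order: fD j i) *)
Definition fD (j i : nat) : A :=
  (-1) ^ (i%:Z - j%:Z + 1) * v ^ (i%:Z - j%:Z) * (\prod_(i.+1 <= k < j.+1) isqw k) *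
  tsum (j - i) i (fun r =>
     (1 - z / (v ^+ i.+2 * w i (r i)))^-1
     * (Wf j (v * w j.-1 (r j.-1))
        * \prod_(i.+1 <= k < j) Wr k (r k) (v * w k.-1 (r k.-1)))
     / (\prod_(i <= k < j) Wr k (r k) (w k (r k)))
     * (w j.-1 (r j.-1) / w i (r i))
     * \prod_(i <= k < j) Dg k (r k)).

Definition eD' pts mup (i j : nat) : A := if i == j then 1 else eD pts mup i j.
Definition fD' (j i : nat) : A := if j == i then 1 else fD j i.

(* Trigonometric Lax matrix T_D(z)_{alpha beta}, 1 <= alpha, beta <= n,
   of the divisor D = (pts, mup, mum); mum does not enter the formula. *)
Definition laxT (pts : seq (pt K)) (mup mum : nat -> int) (al be : nat) : A :=
  \sum_(1 <= i < (minn al be).+1) fD' al i * gD pts mup i * eD' pts mup i be.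

End Lax.

(* Limit as the parameter t -> 0 of an A-valued rational function of a
   central scalar parameter t: F agrees, for all but finitely many t,
   with Q(t)^{-1} P(t) where P has coefficients in A and Q is a scalar
   polynomial with Q(0) <> 0; the limit is then Q(0)^{-1} P(0). *)
Definition lim0 (K : fieldType) (A : unitAlgType K) (F : K -> A) (L : A) : Prop :=
  exists (P : {poly A}) (Q : {poly K}) (s : seq K),
    [/\ Q.[0] != 0, L = Q.[0]^-1 *: P.[0]
      & forall t, t \notin s -> Q.[t] != 0 /\ F t = Q.[t]^-1 *: P.[t%:A]].

From HB Require Import structures.
From mathcomp Require Import all_boot all_order all_algebra.
From mathcomp Require Import complex.
From mathcomp Require Import reals.
Import Order.TTheory GRing.Theory Num.Theory.
Local Open Scope ring_scope.
Set Implicit Arguments. Unset Strict Implicit.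

(* Adding the point varpi_{i_N}[t] with t distinct from the other x_s changes
   T_D(z) only through the factor (1 - t/z)^{-eps_i^vee(varpi_{i_N})} of g_i
   and the factor (1 - v^{-i_N} t/y) of Z_{i_N}.  Since -varpi_{i_N} has
   coordinates 0 or 1, both factors are polynomial in t, hence so is T_D(z)
   away from the finitely many x_s; at t = 0 the factors are 1 and what is
   left is T_{D''}(z), in which mu^- does not appear. *)

Section PolynomialFunctions.
Variable K : fieldType.
Variable A : unitAlgType K.

Definition polyfun (F : K -> A) : Prop :=
  exists P : {poly A}, forall t, F t = P.[t%:A].

Lemma polyfun_eq (F G : K -> A) : polyfun F -> F =1 G -> polyfun G.
Proof. by move=> [P FP] FG; exists P => t; rewrite -FG. Qed.

Lemma polyfun_cst (c : A) : polyfun (fun=> c).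
Proof. by exists c%:P => t; rewrite hornerC. Qed.

Lemma polyfun_scalar : polyfun (fun t => t%:A).
Proof. by exists 'X => t; rewrite hornerX. Qed.

Lemma polyfunD (F G : K -> A) :
  polyfun F -> polyfun G -> polyfun (fun t => F t + G t).
Proof. by move=> [P FP] [Q GQ]; exists (P + Q) => t; rewrite hornerD FP GQ. Qed.

Lemma polyfunN (F : K -> A) : polyfun F -> polyfun (fun t => - F t).
Proof. by move=> [P FP]; exists (- P) => t; rewrite hornerN FP. Qed.

(* Evaluation is multiplicative because the point t%:A is central. *)
Lemma polyfunM (F G : K -> A) :
  polyfun F -> polyfun G -> polyfun (fun t => F t * G t).
Proof.
move=> [P FP] [Q GQ]; exists (P * Q) => t.
by rewrite hornerM_comm ?FP ?GQ // /comm_poly mulr_algl mulr_algr.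
Qed.

Lemma polyfunX (F : K -> A) (m : nat) : polyfun F -> polyfun (fun t => F t ^+ m).
Proof.
move=> PF; elim: m => [|m IH]; first exact: polyfun_eq (polyfun_cst 1) _.
by apply: polyfun_eq (polyfunM IH PF) _ => t; rewrite exprSr.
Qed.

Lemma polyfun_sum (I : Type) (r : seq I) (P : pred I) (F : K -> I -> A) :
  (forall i, P i -> polyfun (F^~ i)) ->
  polyfun (fun t => \sum_(i <- r | P i) F t i).
Proof.
move=> PF; elim: r => [|x r IH].
  by apply: polyfun_eq (polyfun_cst 0) _ => t; rewrite big_nil.
case Px: (P x).
  by apply: polyfun_eq (polyfunD (PF x Px) IH) _ => t; rewrite big_cons Px.
by apply: polyfun_eq IH _ => t; rewrite big_cons Px.
Qed.

Lemma polyfun_prod (I : Type) (r : seq I) (P : pred I) (F : K -> I -> A) :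
  (forall i, P i -> polyfun (F^~ i)) ->
  polyfun (fun t => \prod_(i <- r | P i) F t i).
Proof.
move=> PF; elim: r => [|x r IH].
  by apply: polyfun_eq (polyfun_cst 1) _ => t; rewrite big_nil.
case Px: (P x).
  by apply: polyfun_eq (polyfunM (PF x Px) IH) _ => t; rewrite big_cons Px.
by apply: polyfun_eq IH _ => t; rewrite big_cons Px.
Qed.

Lemma polyfun_subr1_scalar (c d : A) : polyfun (fun t => 1 - c * t%:A * d).
Proof.
apply: polyfunD (polyfun_cst 1) (polyfunN _).
exact: polyfunM (polyfunM (polyfun_cst c) polyfun_scalar) (polyfun_cst d).
Qed.

Lemma lim0_polyfun (F G : K -> A) (s : seq K) :
  polyfun G -> (forall t, t \notin s -> F t = G t) -> lim0 F (G 0).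
Proof.
move=> [P GP] FG; exists P, 1, s; rewrite hornerC invr1 scale1r oner_neq0.
split=> // [|t /FG ->]; first by rewrite GP scale0r.
by rewrite hornerC invr1 scale1r oner_neq0.
Qed.

End PolynomialFunctions.

Section LaxMatrix.
Variable K : fieldType.
Variable A : unitAlgType K.
Variable n : nat.
Variable a : nat -> nat.
Variables v z : A.
Variables Dg w12 : nat -> nat -> A.

Lemma eq_tsum m lo (F G : (nat -> nat) -> A) :
  F =1 G -> tsum n a m lo F = tsum n a m lo G.
Proof.
elim: m lo F G => [|m IH] lo F G FG //=.
by apply: eq_bigr => r _; apply: IH.
Qed.

Lemma polyfun_tsum m lo (F : K -> (nat -> nat) -> A) :
  (forall g, polyfun (F^~ g)) -> polyfun (fun t => tsum n a m lo (F t)).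
Proof.
elim: m lo F => [|m IH] lo F PF //=.
by apply: polyfun_sum => r _; apply: IH => g; apply: PF.
Qed.

Definition eD_of (Z : nat -> A -> A) (mup : nat -> int) (i j : nat) : A :=
  (-1) ^ (i%:Z - j%:Z + 1) * wprod n a w12 j.-1
  * (\prod_(i <= k < j.-1) sqw n a w12 k) * isqw n a w12 i.-1 *
  tsum n a (j - i) i (fun r =>
     (\prod_(i <= k < j) (v ^+ k * w w12 k (r k)) ^ (- (mup k - mup k.+1)))
     / (1 - v ^+ i * w w12 i (r i) / z)
     * (Wf n a w12 i.-1 (v^-1 * w w12 i (r i))
        * \prod_(i <= k < j.-1) Wr n a w12 k (r k) (v^-1 * w w12 k.+1 (r k.+1)))
     / (\prod_(i <= k < j) Wr n a w12 k (r k) (w w12 k (r k)))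
     * (\prod_(i <= k < j) Z k (w w12 k (r k)))
     * (w w12 i (r i) / w w12 j.-1 (r j.-1))
     * \prod_(i <= k < j) (Dg k (r k))^-1).

Definition laxT_of (g : nat -> A) (Z : nat -> A -> A) mup (al be : nat) : A :=
  \sum_(1 <= i < (minn al be).+1) fD' n a v z Dg w12 al i * g i *
     (if i == be then 1 else eD_of Z mup i be).

Lemma laxTE pts mup mum al be :
  laxT n a v z Dg w12 pts mup mum al be =
  laxT_of (gD n a v z w12 pts mup) (Zf v pts) mup al be.
Proof. by []. Qed.

Lemma eq_laxT_of g g' Z Z' mup al be :
  g =1 g' -> (forall k, Z k =1 Z' k) ->
  laxT_of g Z mup al be = laxT_of g' Z' mup al be.
Proof.
move=> gg' ZZ'; apply: eq_bigr => i _; rewrite gg'; congr (_ * _).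
case: (i == be) => //; congr (_ * _); apply: eq_tsum => r.
by congr (_ * _ * _); congr (_ * _); apply: eq_bigr => k _; rewrite ZZ'.
Qed.

Lemma polyfun_laxT_of (g : K -> nat -> A) (Z : K -> nat -> A -> A) mup al be :
  (forall i, polyfun (g^~ i)) -> (forall k y, polyfun (fun t => Z t k y)) ->
  polyfun (fun t => laxT_of (g t) (Z t) mup al be).
Proof.
move=> Pg PZ; apply: polyfun_sum => i _.
apply: polyfunM (polyfunM (polyfun_cst _) (Pg i)) _.
case: (i == be); first exact: polyfun_cst.
apply: polyfunM (polyfun_cst _) _; apply: polyfun_tsum => r.
apply: polyfunM _ (polyfun_cst _); apply: polyfunM _ (polyfun_cst _).
by apply: polyfunM (polyfun_cst _) _; apply: polyfun_prod => k _.
Qed.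

Lemma Zf_rcons (pts : seq (pt K)) (p : pt K) k y :
  Zf v (rcons pts p) k y = Zf v pts k y *
    (if p_i p == k then (1 - v ^ (- (k%:Z)) * (p_x p)%:A / y) ^ (p_g p) else 1).
Proof. by rewrite /Zf big_rcons. Qed.

Lemma lamx_fresh (pts : seq (pt K)) x j : x \notin [seq p_x p | p <- pts] -> lamx pts x j = 0.
Proof.
move=> xN; rewrite /lamx big_seq_cond big1 // => p /andP[pP /eqP px].
by move: xN; rewrite -px map_f.
Qed.

Lemma gD_rcons_fresh (pts : seq (pt K)) mup (p : pt K) i :
  p_x p \notin [seq p_x q | q <- pts] ->
  gD n a v z w12 (rcons pts p) mup i =
  gD n a v z w12 pts mup i * (1 - (p_x p)%:A / z) ^ (- (p_g p * varpi (p_i p) i)).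
Proof.
move=> xN; set xs := [seq p_x q | q <- pts].
have undup_xs : [seq y <- undup xs | y != p_x p] = undup xs.
  apply/all_filterP/allP => y; rewrite mem_undup => yP.
  by apply: contraNneq xN => <-.
rewrite /gD map_rcons undup_rcons undup_xs big_rcons [LHS]mulrA.
rewrite /lamx big_rcons /= eqxx -/(lamx pts _ i) lamx_fresh // add0r.
congr (_ * _ * _); rewrite big_seq [RHS]big_seq; apply: eq_bigr => x.
rewrite mem_undup /lamx big_rcons /= => xP.
by rewrite ifN ?addr0 //; apply: contraNneq xN => ->.
Qed.

End LaxMatrix.

Lemma oppr_varpi i j : - varpi i j = (i < j)%N%:Z.
Proof. by rewrite /varpi; case: ltnP. Qed.

Theorem proposition3p21 (R : realType) (A : unitAlgType R[i]) (n : nat)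
    (a : nat -> nat) (v z : A) (Dg w12 : nat -> nat -> A)
    (pts : seq (pt R[i])) (iN : nat) (mup mum : nat -> int) :
  (2 <= n)%N ->
  qt_relations n a v z Dg w12 ->
  (1 <= iN <= n.-1)%N ->
  (forall t : R[i], t != 0 ->
     valid_divisor n (rcons pts (iN, 1%:Z, t)) mup mum) ->
  (forall t : R[i], integrality n (rcons pts (iN, 1%:Z, t)) mup mum a) ->
  forall al be : nat, (1 <= al <= n)%N -> (1 <= be <= n)%N ->
    lim0 (fun t : R[i] => laxT n a v z Dg w12 (rcons pts (iN, 1%:Z, t)) mup mum al be)
         (laxT n a v z Dg w12 pts mup (fun j => mum j + varpi iN j) al be).
Proof.
move=> _ _ _ _ _ al be _ _.
pose pN t : pt R[i] := (iN, 1%:Z, t).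
pose g t i := gD n a v z w12 pts mup i *
  (1 - (p_x (pN t))%:A / z) ^ (- (p_g (pN t) * varpi (p_i (pN t)) i)).
pose Z t k y := Zf v pts k y * (if p_i (pN t) == k then
  (1 - v ^ (- (k%:Z)) * (p_x (pN t))%:A / y) ^ (p_g (pN t)) else 1).
pose T t := laxT_of n a v z Dg w12 (g t) (Z t) mup al be.
have -> : laxT n a v z Dg w12 pts mup (fun j => mum j + varpi iN j) al be = T 0.
  apply: eq_laxT_of => [i | k y]; rewrite /g /Z /= scale0r ?mulr0 mul0r subr0.
    by rewrite exp1rz mulr1.
  by rewrite if_same mulr1.
apply: (@lim0_polyfun _ _ _ T [seq p_x p | p <- pts]).
  apply: polyfun_laxT_of => [i | k y]; apply: polyfunM (polyfun_cst _) _;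
    rewrite /pN /p_x /p_g /p_i /=.
    rewrite mul1r oppr_varpi.
    apply: polyfunX; apply: polyfun_eq (polyfun_subr1_scalar 1 z^-1) _ => t.
    by rewrite mul1r.
  case: (iN == k); last exact: polyfun_cst.
  exact: polyfunX 1 (polyfun_subr1_scalar (v ^ (- k%:Z)) y^-1).
move=> t tN; rewrite laxTE; apply: eq_laxT_of => [i | k y].
  exact: gD_rcons_fresh.
exact: Zf_rcons.
Qed.
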